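(* Let $G$ be a strongly regular graph with complement $\overline{G}$. Then $G$ is $2$-e.c. if and only if both $G$ and $\overline{G}$ are connected and both $G$ and $\overline{G}$ contain a triangle.
   Context: A graph $G$ with vertex set $V$ is $n$-e.c. if for every pair of disjoint subsets $A,B\subseteq V$ with $|A\cup B|=n$ (either may be empty) there is a vertex $z\notin A\cup B$ adjacent to every vertex of $A$ and to no vertex of $B$. A strongly regular graph with parameters $(v,k,\lambda,\mu)$ is a $k$-regular graph on $v$ vertices in which every pair of adjacent vertices has exactly $\lambda$ common neighbours and every pair of distinct nonadjacent vertices has exactly $\mu$ common neighbours; it is required to have at least one edge and at least one pair of distinct nonadjacent vertices. *)

From mathcomp Require Import all_boot.
Set Implicit Arguments. Unset Strict Implicit. Unset Printing Implicit Defensive.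

Definition simple_graph (T : finType) (e : rel T) : Prop :=
  symmetric e /\ irreflexive e.

Definition compl_rel (T : finType) (e : rel T) : rel T :=
  fun x y => (x != y) && ~~ e x y.

Definition nbhd (T : finType) (e : rel T) (x : T) : {set T} := [set y | e x y].

Definition srg (T : finType) (e : rel T) (v k lam mu : nat) : Prop :=
  [/\ #|T| = v,
      (forall x, #|nbhd e x| = k),
      (forall x y, e x y -> #|nbhd e x :&: nbhd e y| = lam),
      (forall x y, x != y -> ~~ e x y -> #|nbhd e x :&: nbhd e y| = mu) &
      ((exists x y, e x y) /\ (exists x y, (x != y) && ~~ e x y))].

Definition strongly_regular (T : finType) (e : rel T) : Prop :=
  exists v k lam mu, srg e v k lam mu.

Definition n_ec (T : finType) (e : rel T) (n : nat) : Prop :=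
  forall A B : {set T}, [disjoint A & B] -> #|A :|: B| = n ->
    exists z, z \notin A :|: B /\
      (forall a, a \in A -> e z a) /\ (forall b, b \in B -> ~~ e z b).

Definition connected (T : finType) (e : rel T) : Prop :=
  forall x y : T, connect e x y.

Definition has_triangle (T : finType) (e : rel T) : Prop :=
  exists x y z : T, [&& e x y, e y z & e x z].

From mathcomp Require Import all_boot zify.
Set Implicit Arguments. Unset Strict Implicit. Unset Printing Implicit Defensive.

(* Call a graph pair-e.c. if for every pair x != y and every adjacency pattern
   (a, b) some third vertex z has adjacency a to x and b to y.  For a symmetric
   relation this is 2-e.c., and it passes to the complement by negating the
   pattern; common neighbours and common non-neighbours then give connectivity
   and triangles in G and in its complement.
   Conversely, in a strongly regular graph the number of vertices of pattern
   (a, b) over a pair (x, y) is determined by k, lambda, mu, v and whether xy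
   is an edge, so it suffices to realize each pattern over one edge and one
   non-edge.  A triangle gives (1,1) over an edge; an induced path u-v-w,
   which exists because G is connected but not complete, gives (1,1) over the
   non-edge uw and (1,0) over the edge vu; the same objects in the complement
   give the negated patterns, and swapping x and y gives the last two. *)

Lemma connect_exit (T : finType) (r : rel T) (S : {set T}) u w :
  connect r u w -> u \in S -> w \notin S ->
  exists a b, [/\ a \in S, b \notin S & r a b].
Proof.
move=> /connectP [p + ->]; elim: p u => [|v p IHp] u /=; first by move=> _ ->.
case/andP=> ruv pv uS wS; case vS: (v \in S); first exact: IHp pv vS wS.
by exists u, v; rewrite vS.
Qed.

Section AdjacencyClasses.
Variables (T : finType) (e : rel T).

Definition adj_class (a b : bool) (x y : T) : {set T} :=
  [set z | [&& z != x, z != y, e x z == a & e y z == b]].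

Definition pair_ec : Prop :=
  forall a b x y, x != y -> exists z, z \in adj_class a b x y.

Definition realized (a b c : bool) : Prop :=
  exists x y z, [/\ x != y, e x y = c & z \in adj_class a b x y].

Lemma adj_classC a b x y : adj_class a b x y = adj_class b a y x.
Proof. by apply/setP => z; rewrite !inE andbCA; do 2!congr (_ && _); apply: andbC. Qed.

Lemma mem_adj_class a b x y z :
  z != x -> z != y -> e x z = a -> e y z = b -> z \in adj_class a b x y.
Proof. by rewrite inE => -> -> -> ->; rewrite !eqxx. Qed.

Hypotheses (sym_e : symmetric e) (irr_e : irreflexive e).

Lemma adj_neq x y : e x y -> x != y.
Proof. by apply: contraTneq => ->; rewrite irr_e. Qed.

Lemma adj_class11 x y : adj_class true true x y = nbhd e x :&: nbhd e y.
Proof.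
apply/setP => z; rewrite !inE !eqb_id.
have [->|_] := eqVneq z x; first by rewrite irr_e.
by have [->|_] := eqVneq z y; rewrite ?irr_e ?andbF.
Qed.

Lemma card_nbhd_adj_class x y :
  #|adj_class true false x y| + #|adj_class true true x y| + e x y = #|nbhd e x|.
Proof.
rewrite (cardsD1 y (nbhd e x)) inE [LHS]addnC.
rewrite -(cardsID (nbhd e y) (nbhd e x :\ y)) [X in _ + X = _]addnC.
congr (_ + (_ + _)); apply: eq_card => z; rewrite !inE;
  (have [->|_] := eqVneq z x; first by rewrite irr_e !andbF);
  by case: (z == y) (e x z) (e y z) => [] [] [].
Qed.

Lemma card_adj_classes x y : x != y ->
  #|adj_class true true x y| + #|adj_class true false x y|
  + #|adj_class false true x y| + #|adj_class false false x y| + 2 = #|T|.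
Proof.
move=> nxy; rewrite -(cardsC [set x; y]) cards2 nxy addnC; congr (_ + _).
set C := ~: [set x; y]; rewrite -(cardsID (nbhd e x) C).
rewrite -(cardsID (nbhd e y) (C :&: _)) -(cardsID (nbhd e y) (C :\: _)) !addnA.
by congr (_ + _ + _ + _); apply: eq_card => z;
  rewrite !inE negb_or; case: (z == x) (z == y) (e x z) (e y z) => [] [] [] [].
Qed.

Lemma realizedC a b c : realized a b c -> realized b a c.
Proof.
case=> x [y [z [nxy <- zP]]]; exists y, x, z.
by split; [rewrite eq_sym | apply: sym_e | rewrite adj_classC].
Qed.

Lemma realized_triangle : has_triangle e -> realized true true true.
Proof.
case=> x [y [z /and3P [exy eyz exz]]]; exists x, y, z; split=> //; first exact: adj_neq.
by apply: mem_adj_class; rewrite // eq_sym adj_neq.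
Qed.

Lemma induced_path : connected e -> (exists x y, (x != y) && ~~ e x y) ->
  exists u v w, [/\ e u v, e v w, u != w & ~~ e u w].
Proof.
move=> conn [u [w /andP [nuw euw]]].
have [||v [w' [vS w'S evw']]] := connect_exit (S := u |: nbhd e u) (conn u w).
- by rewrite !inE eqxx.
- by rewrite !inE negb_or eq_sym nuw.
move: vS w'S evw'; rewrite !inE negb_or => /orP [/eqP -> | euv] /andP [nw'u euw'] evw'.
  by rewrite evw' in euw'.
by exists u, v, w'; rewrite eq_sym.
Qed.

Lemma realized_path : connected e -> (exists x y, (x != y) && ~~ e x y) ->
  realized true true false /\ realized true false true.
Proof.
move=> conn /(induced_path conn) [u [v [w [euv evw nuw euw]]]]; split.
- exists u, w, v; split=> //; first exact: negbTE.
  apply: mem_adj_class => //; first by rewrite eq_sym adj_neq.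
    exact: adj_neq.
  by rewrite sym_e.
- exists v, u, w; split; [by rewrite eq_sym adj_neq | by rewrite sym_e |].
  apply: mem_adj_class; [by rewrite eq_sym adj_neq | by rewrite eq_sym | by [] |].
  exact: negbTE.
Qed.

Lemma connected_of_pair_ec : pair_ec -> connected e.
Proof.
move=> ec x y; have [->|nxy] := eqVneq x y; first exact: connect0.
have [z] := ec true true x y nxy; rewrite inE => /and4P [_ _ /eqP exz /eqP eyz].
by apply: (@connect_trans _ _ z); apply: connect1; rewrite // sym_e.
Qed.

Lemma triangle_of_pair_ec : pair_ec -> (exists x y, e x y) -> has_triangle e.
Proof.
move=> ec [x [y exy]]; have [z] := ec true true x y (adj_neq exy).
by rewrite inE => /and4P [_ _ /eqP exz /eqP eyz]; exists x, y, z; rewrite exy eyz exz.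
Qed.

Lemma n_ec2_pair_ec : n_ec e 2 <-> pair_ec.
Proof.
split=> [ec a b x y nxy | ec A B dAB].
- pose S := [set x; y]; pose P := [set t | if t == x then a else b].
  have [||z [zS [zA zB]]] := ec (S :&: P) (S :\: P); rewrite ?setID.
  + rewrite -setI_eq0; apply/eqP/setP => t; rewrite !in_setI in_setD in_set0.
    by case: (t \in P); rewrite ?andbF.
  + by rewrite /S cards2 nxy.
  have ezP t : t \in S -> e z t = (t \in P).
    move=> tS; case: (boolP (t \in P)) => tP; first by apply: zA; rewrite inE tS.
    by apply/negbTE/zB; rewrite inE tS tP.
  move: zS; rewrite setID !inE negb_or => /andP [nzx nzy].
  exists z; apply: mem_adj_class; rewrite // sym_e ezP !inE ?eqxx ?orbT //.
  by rewrite eq_sym (negbTE nxy).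
- move=> cardAB; have /cards2P [x [y [nxy defAB]]] : #|A :|: B| == 2 by rewrite cardAB.
  have [z] := ec (x \in A) (y \in A) x y nxy.
  rewrite inE => /and4P [nzx nzy /eqP exz /eqP eyz].
  have ezA t : t \in A :|: B -> e z t = (t \in A).
    by rewrite defAB !inE => /orP [] /eqP ->; rewrite sym_e.
  exists z; split; first by rewrite defAB !inE negb_or nzx nzy.
  split=> [t tA | t tB]; rewrite ezA ?inE ?tA ?tB ?orbT //.
  by rewrite (disjointFl dAB tB).
Qed.

Section StronglyRegular.
Variables (k lam mu : nat).
Hypotheses (regular : forall x, #|nbhd e x| = k)
  (common_adj : forall x y, e x y -> #|nbhd e x :&: nbhd e y| = lam)
  (common_nonadj : forall x y, x != y -> ~~ e x y -> #|nbhd e x :&: nbhd e y| = mu).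

Lemma card_adj_class_eq a b x y x' y' : x != y -> x' != y' -> e x y = e x' y' ->
  #|adj_class a b x y| = #|adj_class a b x' y'|.
Proof.
move=> nxy nxy' exy.
have n11 : #|adj_class true true x y| = #|adj_class true true x' y'|.
  rewrite !adj_class11; have [Exy | nExy] := boolP (e x y).
    by rewrite !common_adj // -exy.
  by rewrite !common_nonadj // -exy.
have n10 := card_nbhd_adj_class x y; have n10' := card_nbhd_adj_class x' y'.
have n01 := card_nbhd_adj_class y x; have n01' := card_nbhd_adj_class y' x'.
rewrite !(adj_classC _ _ y x) (sym_e y) in n01.
rewrite !(adj_classC _ _ y' x') (sym_e y') in n01'.
have n := card_adj_classes nxy; have n' := card_adj_classes nxy'.
rewrite !regular -exy in n10 n10' n01 n01'.
by case: a; case: b; lia.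
Qed.

Lemma pair_ec_of_realized : (forall a b c, realized a b c) -> pair_ec.
Proof.
move=> real a b x y nxy; have [x' [y' [z [nxy' exy' zP]]]] := real a b (e x y).
apply/card_gt0P; rewrite (card_adj_class_eq a b nxy nxy' (esym exy')).
by apply/card_gt0P; exists z.
Qed.

End StronglyRegular.

End AdjacencyClasses.

Section Complement.
Variables (T : finType) (e : rel T).
Hypotheses (sym_e : symmetric e) (irr_e : irreflexive e).

Lemma compl_rel_sym : symmetric (compl_rel e).
Proof. by move=> x y; rewrite /compl_rel eq_sym sym_e. Qed.

Lemma compl_rel_irr : irreflexive (compl_rel e).
Proof. by move=> x; rewrite /compl_rel eqxx. Qed.

Lemma compl_relE x y : x != y -> compl_rel e x y = ~~ e x y.
Proof. by rewrite /compl_rel => ->. Qed.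

Lemma adj_class_compl a b x y :
  adj_class (compl_rel e) a b x y = adj_class e (~~ a) (~~ b) x y.
Proof.
apply/setP => z; rewrite !inE.
have [->|zx] := eqVneq z x => //=; have [->|zy] := eqVneq z y => //=.
by rewrite !compl_relE 1?eq_sym //; case: (e x z) (e y z) a b => [] [] [] [].
Qed.

Lemma pair_ec_compl : pair_ec e -> pair_ec (compl_rel e).
Proof.
by move=> ec a b x y /(ec (~~ a) (~~ b)) [z zP]; exists z; rewrite adj_class_compl.
Qed.

Lemma realized_compl a b c :
  realized (compl_rel e) a b c -> realized e (~~ a) (~~ b) (~~ c).
Proof.
case=> x [y [z [nxy <- zP]]]; exists x, y, z.
by split; rewrite -?adj_class_compl ?compl_relE ?negbK.
Qed.

Lemma realized_all : connected e -> connected (compl_rel e) ->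
  has_triangle e -> has_triangle (compl_rel e) ->
  (exists x y, e x y) -> (exists x y, (x != y) && ~~ e x y) ->
  forall a b c, realized e a b c.
Proof.
move=> conn connC tri triC [x [y exy]] nonedge.
have [TTF TFT] := realized_path sym_e irr_e conn nonedge.
have nonedgeC : exists x y, (x != y) && ~~ compl_rel e x y.
  by exists x, y; rewrite compl_relE ?negbK ?(adj_neq irr_e exy).
have [/realized_compl FFT /realized_compl FTF] :=
  realized_path compl_rel_sym compl_rel_irr connC nonedgeC.
have FFF := realized_compl (realized_triangle compl_rel_irr triC).
have TTT := realized_triangle irr_e tri.
by case=> [] [] [] //; apply: (realizedC sym_e).
Qed.

End Complement.

Theorem mainTheorem2 (T : finType) (e : rel T) :
  simple_graph e -> strongly_regular e ->
  (n_ec e 2 <->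
   [/\ connected e, connected (compl_rel e),
       has_triangle e & has_triangle (compl_rel e)]).
Proof.
move=> [sym_e irr_e] [_ [k [lam [mu [_ regular common_adj common_nonadj]]]]].
case=> edge nonedge.
rewrite n_ec2_pair_ec //; split=> [ec | [conn connC tri triC]].
- have ecC := pair_ec_compl ec.
  split.
  + exact: connected_of_pair_ec.
  + exact: connected_of_pair_ec (compl_rel_sym sym_e) ecC.
  + exact: triangle_of_pair_ec edge.
  + apply: (triangle_of_pair_ec (@compl_rel_irr _ e) ecC).
    by case: nonedge => x [y /andP [nxy exy]]; exists x, y; rewrite compl_relE.
- apply: (pair_ec_of_realized sym_e irr_e regular common_adj common_nonadj).
  exact: realized_all.
Qed.
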